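(* Let $(G,\alpha)$ be a finite Hom-group and $H\preceq G$. Then $|H|$ divides $|G|$.
   Context: A Hom-group is a tuple $(G,\mu,1,\alpha)$ where $G$ is a set, $\mu:G\times G\to G$ is a binary operation written $\mu(g,h)=gh$, $1\in G$ is a distinguished element, and $\alpha:G\to G$ is a bijection, such that: (1) Hom-associativity: $\alpha(g)(hk)=(gh)\alpha(k)$ for all $g,h,k\in G$; (2) $\alpha(gk)=\alpha(g)\alpha(k)$ for all $g,k$; (3) Hom-unitality: $g1=1g=\alpha(g)$ for all $g$, and $\alpha(1)=1$; (4) for every $g\in G$ there exists $g^{-1}\in G$ with $gg^{-1}=g^{-1}g=1$ (such an inverse is unique). A Hom-subgroup of $(G,\alpha)$ is a subset $H\subseteq G$ such that $H$, with the restriction of the multiplication of $G$, the element $1$, and the restriction of $\alpha$, is itself a Hom-group (in particular $1\in H$, $H$ is closed under multiplication and inverses, and $\alpha$ restricts to a bijection $H\to H$). We write $H\preceq G$. *)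

From mathcomp Require Import all_boot.
Set Implicit Arguments. Unset Strict Implicit. Unset Printing Implicit Defensive.

Definition is_hom_group (G : Type) (mu : G -> G -> G) (e : G) (alpha : G -> G) : Prop :=
  [/\ bijective alpha,
      (forall g h k, mu (alpha g) (mu h k) = mu (mu g h) (alpha k)),
      (forall g k, alpha (mu g k) = mu (alpha g) (alpha k)),
      (forall g, mu g e = alpha g /\ mu e g = alpha g) /\ alpha e = e
    & (forall g, exists g', mu g g' = e /\ mu g' g = e)].

(* H is a Hom-subgroup of (G, mu, e, alpha): H with the restricted operations
   is itself a Hom-group. *)
Definition is_hom_subgroup (G : finType) (mu : G -> G -> G) (e : G) (alpha : G -> G)
    (H : {set G}) : Prop :=
  [/\ e \in H,
      (forall g h, g \in H -> h \in H -> mu g h \in H),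
      (forall g, g \in H -> alpha g \in H) /\
        {in H &, injective alpha} /\ (forall h, h \in H -> exists2 g, g \in H & alpha g = h),
      (forall g h k, g \in H -> h \in H -> k \in H ->
          mu (alpha g) (mu h k) = mu (mu g h) (alpha k)) /\
      (forall g k, g \in H -> k \in H -> alpha (mu g k) = mu (alpha g) (alpha k)) /\
      ((forall g, g \in H -> mu g e = alpha g /\ mu e g = alpha g) /\ alpha e = e)
    & (forall g, g \in H -> exists2 g', g' \in H & mu g g' = e /\ mu g' g = e)].

(* Twisting the multiplication back by alpha^-1, [x * y := alpha^-1 (mu x y)],
   turns a Hom-group into an ordinary group with the same unit and inverses:
   Hom-associativity together with multiplicativity of alpha gives
   associativity, and Hom-unitality gives [e * x = alpha^-1 (alpha x) = x].
   A Hom-subgroup H is closed under the untwisted product because alpha maps H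
   onto H, so H is a subgroup of a finite group and Lagrange applies. *)

From HB Require Import structures.
From mathcomp Require Import all_boot all_fingroup.
Set Implicit Arguments. Unset Strict Implicit. Unset Printing Implicit Defensive.

Section UntwistedOperations.
Variables (G : finType) (mu : G -> G -> G) (e : G) (alpha : G -> G).

Definition alpha_inv (y : G) : G := odflt y [pick x | alpha x == y].

Definition untwisted_mul (x y : G) : G := alpha_inv (mu x y).

Definition hom_inv (x : G) : G := odflt x [pick g | (mu x g == e) && (mu g x == e)].

Lemma alpha_invK : bijective alpha -> cancel alpha_inv alpha.
Proof.
case=> f fK Kf y; rewrite /alpha_inv; case: pickP => [x /eqP //|/(_ (f y))].
by rewrite Kf eqxx.
Qed.

Lemma alphaK : bijective alpha -> cancel alpha alpha_inv.
Proof. by move=> bij_alpha x; apply: (bij_inj bij_alpha); rewrite alpha_invK. Qed.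

End UntwistedOperations.

Definition untwisted (G : finType) (mu : G -> G -> G) (e : G) (alpha : G -> G)
  of is_hom_group mu e alpha : Type := G.

HB.instance Definition _ G mu e alpha P := Finite.on (@untwisted G mu e alpha P).

Section UntwistedGroup.
Variables (G : finType) (mu : G -> G -> G) (e : G) (alpha : G -> G).
Hypothesis homG : is_hom_group mu e alpha.

Let T := untwisted homG.

(* The finType structures on [T] and [G] are not convertible (structure records
   have no eta rule), so cardinalities are transported along the identity. *)
Lemma card_untwisted : #|{: T}| = #|G|.
Proof. by apply: bij_eq_card; exists (fun x : G => x : T). Qed.

Lemma card_untwisted_set (A : {set G}) : #|[set x : T in A]| = #|A|.
Proof.
have imA : (fun x : T => x : G) @: [set x : T in A] = A.
  apply/setP => x; apply/imsetP/idP => [[y]|xA].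
    by rewrite inE => yA ->.
  by exists x; rewrite ?inE.
by rewrite -[in RHS]imA card_imset.
Qed.

Lemma untwisted_mulA : associative (untwisted_mul mu alpha : T -> T -> T).
Proof.
have [bij_alpha hom_assoc alpha_mul _ _] := homG.
move=> x y z; rewrite /untwisted_mul; congr (alpha_inv alpha _).
apply: (bij_inj bij_alpha).
by rewrite !alpha_mul !(alpha_invK bij_alpha) hom_assoc.
Qed.

Lemma untwisted_mul1 : left_id (e : T) (untwisted_mul mu alpha).
Proof.
have [bij_alpha _ _ [unit_e _] _] := homG.
by move=> x; rewrite /untwisted_mul (proj2 (unit_e x)) alphaK.
Qed.

Lemma untwisted_mulV : left_inverse (e : T) (hom_inv mu e) (untwisted_mul mu alpha).
Proof.
have [bij_alpha _ _ [_ alpha_e] inv_ex] := homG.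
move=> x; rewrite /untwisted_mul /hom_inv; case: pickP => [g /andP[_ /eqP ->]|].
  by rewrite -{1}alpha_e alphaK.
by have [g [xg gx]] := inv_ex x => /(_ g); rewrite xg gx !eqxx.
Qed.

End UntwistedGroup.

HB.instance Definition _ G mu e alpha P :=
  Finite_isGroup.Build (@untwisted G mu e alpha P) (@untwisted_mulA G mu e alpha P)
    (@untwisted_mul1 G mu e alpha P) (@untwisted_mulV G mu e alpha P).

Lemma hom_subgroup_untwisted_group_set (G : finType) (mu : G -> G -> G) (e : G)
    (alpha : G -> G) (homG : is_hom_group mu e alpha) (H : {set G}) :
  is_hom_subgroup mu e alpha H -> group_set [set x : untwisted homG in H].
Proof.
move=> [He mulH [_ [_ alpha_onto]] _ _].
have [bij_alpha _ _ _ _] := homG.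
apply/group_setP; split=> [|x y]; rewrite !inE // => xH yH.
have [g gH alpha_g] := alpha_onto _ (mulH _ _ xH yH).
by change (alpha_inv alpha (mu x y) \in H); rewrite -alpha_g alphaK.
Qed.

Theorem mainTheorem9 (G : finType) (mu : G -> G -> G) (e : G) (alpha : G -> G)
    (H : {set G}) :
  is_hom_group mu e alpha -> is_hom_subgroup mu e alpha H -> #|H| %| #|G|.
Proof.
move=> homG subH.
have groupH := hom_subgroup_untwisted_group_set homG subH.
by move: (cardSg (subsetT (Group groupH))); rewrite cardsT card_untwisted card_untwisted_set.
Qed.
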